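(* Let $$D_{10}=\begin{bmatrix} 1 & 1 & 1 & 1 & 1 & 1 & 1 & 1 & 1 & 1 \\ 1 & -1 & -\mathrm{i} & -\mathrm{i} & -\mathrm{i} & -\mathrm{i} & \mathrm{i} & \mathrm{i} & \mathrm{i} & \mathrm{i} \\ 1 & -\mathrm{i} & -1 & \mathrm{i} & \mathrm{i} & -\mathrm{i} & -\mathrm{i} & -\mathrm{i} & \mathrm{i} & \mathrm{i} \\ 1 & -\mathrm{i} & \mathrm{i} & -1 & -\mathrm{i} & \mathrm{i} & -\mathrm{i} & \mathrm{i} & -\mathrm{i} & \mathrm{i} \\ 1 & -\mathrm{i} & \mathrm{i} & -\mathrm{i} & -1 & \mathrm{i} & \mathrm{i} & -\mathrm{i} & \mathrm{i} & -\mathrm{i} \\ 1 & -\mathrm{i} & -\mathrm{i} & \mathrm{i} & \mathrm{i} & -1 & \mathrm{i} & \mathrm{i} & -\mathrm{i} & -\mathrm{i} \\ 1 & \mathrm{i} & -\mathrm{i} & -\mathrm{i} & \mathrm{i} & \mathrm{i} & -1 & -\mathrm{i} & -\mathrm{i} & \mathrm{i} \\ 1 & \mathrm{i} & -\mathrm{i} & \mathrm{i} & -\mathrm{i} & \mathrm{i} & -\mathrm{i} & -1 & \mathrm{i} & -\mathrm{i} \\ 1 & \mathrm{i} & \mathrm{i} & -\mathrm{i} & \mathrm{i} & -\mathrm{i} & -\mathrm{i} & \mathrm{i} & -1 & -\mathrm{i} \\ 1 & \mathrm{i} & \mathrm{i} & \mathrm{i} & -\mathrm{i} & -\mathrm{i}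 & \mathrm{i} & -\mathrm{i} & -\mathrm{i} & -1 \end{bmatrix}.$$ Define real $10\times10$ matrices $V_4,V_{15},V_{16}$ (rows and columns indexed $1,\ldots,10$), all of whose entries are $0$ except: $V_4$ has entry $+1$ at positions $(2,5),(2,9),(4,7),(4,8),(6,5),(6,9),(10,7),(10,8)$ and entry $-1$ at positions $(5,2),(5,6),(7,4),(7,10),(8,4),(8,10),(9,2),(9,6)$; $V_{15}$ has entry $+1$ at positions $(4,2),(4,6),(5,2),(5,6),(9,2),(9,6),(10,2),(10,6)$ and entry $-1$ at positions $(2,4),(2,5),(2,9),(2,10),(6,4),(6,5),(6,9),(6,10)$; $V_{16}$ has entry $+1$ at positions $(4,2),(4,6),(7,5),(7,9),(8,5),(8,9),(10,2),(10,6)$ and entry $-1$ at positions $(2,4),(2,10),(5,7),(5,8),(6,4),(6,10),(9,7),(9,8)$. Then for all $a,b,c\in\mathbb{R}$, the matrix $D_{10}\circ\mathrm{EXP}\big(\mathrm{i}(aV_4+bV_{15}+cV_{16})\big)$ is a dephased complex Hadamard matrix.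
   Context: $\circ$ denotes the entrywise (Hadamard) product and $[\mathrm{EXP}(\mathrm{i}R)]_{j,k}=e^{\mathrm{i}[R]_{j,k}}$ for a real matrix $R$. A dephased complex Hadamard matrix of order $d$ is a $d\times d$ matrix with unimodular entries, first row and first column all equal to $1$, and $HH^*=dI_d$, where $^*$ is conjugate transpose. *)

From HB Require Import structures.
From mathcomp Require Import all_boot all_order all_algebra.
From mathcomp Require Import reals trigo.
From mathcomp Require Import complex.
Set Implicit Arguments. Unset Strict Implicit. Unset Printing Implicit Defensive.
Import Order.TTheory GRing.Theory Num.Theory.
Local Open Scope ring_scope.
Local Open Scope complex_scope.

Section Defs.
Variable R : realType.
Local Notation C := R[i].

Definition expi (t : R) : C := (cos t +i* sin t).

Definition hadamard_mx m n (A B : 'M[C]_(m, n)) : 'M[C]_(m, n) :=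
  \matrix_(i, j) (A i j * B i j).

Definition EXPi m n (A : 'M[R]_(m, n)) : 'M[C]_(m, n) :=
  \matrix_(i, j) expi (A i j).

Definition adjmx m n (A : 'M[C]_(m, n)) : 'M[C]_(n, m) :=
  \matrix_(i, j) (A j i)^*.

Definition dephased_CH n (H : 'M[C]_n.+1) : Prop :=
  [/\ forall i j, `|H i j| = 1,
      forall j, H ord0 j = 1,
      forall i, H i ord0 = 1 &
      H *m adjmx H = (n.+1)%:R%:M].

Definition code (k : nat) : C :=
  match k with 0%N => 1 | 1%N => -1 | 2%N => 'i | _ => - 'i end.

Definition D10_codes : seq (seq nat) :=
  [:: [:: 0;0;0;0;0;0;0;0;0;0];
      [:: 0;1;3;3;3;3;2;2;2;2];
      [:: 0;3;1;2;2;3;3;3;2;2];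
      [:: 0;3;2;1;3;2;3;2;3;2];
      [:: 0;3;2;3;1;2;2;3;2;3];
      [:: 0;3;3;2;2;1;2;2;3;3];
      [:: 0;2;3;3;2;2;1;3;3;2];
      [:: 0;2;3;2;3;2;3;1;2;3];
      [:: 0;2;2;3;2;3;3;2;1;3];
      [:: 0;2;2;2;3;3;2;3;3;1]]%N.

Definition D10 : 'M[C]_10 :=
  \matrix_(i, j) code (nth 0%N (nth [::] D10_codes i) j).

(* Real 10x10 matrix with +1 at positions pos, -1 at positions neg
   (positions 1-based, as in the paper), 0 elsewhere. *)
Definition pm_mx (pos neg : seq (nat * nat)) : 'M[R]_10 :=
  \matrix_(i, j)
    (if ((i.+1, j.+1) \in pos) then 1
     else if ((i.+1, j.+1) \in neg) then -1 else 0).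

Definition V4 : 'M[R]_10 :=
  pm_mx [:: (2,5);(2,9);(4,7);(4,8);(6,5);(6,9);(10,7);(10,8)]%N
        [:: (5,2);(5,6);(7,4);(7,10);(8,4);(8,10);(9,2);(9,6)]%N.
Definition V15 : 'M[R]_10 :=
  pm_mx [:: (4,2);(4,6);(5,2);(5,6);(9,2);(9,6);(10,2);(10,6)]%N
        [:: (2,4);(2,5);(2,9);(2,10);(6,4);(6,5);(6,9);(6,10)]%N.
Definition V16 : 'M[R]_10 :=
  pm_mx [:: (4,2);(4,6);(7,5);(7,9);(8,5);(8,9);(10,2);(10,6)]%N
        [:: (2,4);(2,10);(5,7);(5,8);(6,4);(6,10);(9,7);(9,8)]%N.

End Defs.

From HB Require Import structures.
From mathcomp Require Import all_boot all_order all_algebra.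
From mathcomp Require Import reals trigo.
From mathcomp Require Import complex.
From mathcomp Require Import ring.
Set Implicit Arguments.
Unset Strict Implicit.
Unset Printing Implicit Defensive.
Import Order.TTheory GRing.Theory Num.Theory.
Local Open Scope ring_scope.

(* Each entry of the matrix is i^q e^(i(a x + b y + c z)) for an integer phase
   (q mod 4, x, y, z), and this expression turns addition of phases into
   multiplication.  Hence the entries of row i times the conjugates of row j
   are the values at the differences of the phases of the two rows.  For i <> j
   these ten differences split into pairs differing by a half turn (q -> q + 2),
   whose contributions cancel whatever a, b, c are; this finite fact, like the
   vanishing of the phases on the first row and column, is checked by
   computation. *)

Lemma sum_eq0_perm_opp (T : eqType) (K : numDomainType) (F : T -> K) (f : T -> T)
    (s : seq T) :
  (forall x, F (f x) = - F x) -> perm_eq s (map f s) -> \sum_(x <- s) F x = 0.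
Proof.
move=> Ff_opp sf; set S := \sum_(x <- s) F x.
have /eqP : S = - S.
  by rewrite {1}/S (perm_big _ sf) big_map (eq_bigr _ (fun x _ => Ff_opp x)) sumrN.
by rewrite -addr_eq0 -mulr2n mulrn_eq0 => /eqP.
Qed.

Section CharacterHadamard.
Variables (R : realType) (G : zmodType) (chi : G -> R[i]) (h : G).
Hypothesis chiD : {morph chi : u v / u + v >-> u * v}.
Hypothesis norm_chi : forall v, `|chi v| = 1.
Hypothesis chi_h : chi h = -1.

Lemma chi_neq0 v : chi v != 0.
Proof. by rewrite -normr_eq0 norm_chi oner_eq0. Qed.

Lemma chi0 : chi 0 = 1.
Proof. by apply: (mulfI (chi_neq0 0)); rewrite -chiD addr0 mulr1. Qed.

Lemma conj_chi v : (chi v)^*%C = chi (- v).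
Proof.
apply: (mulfI (chi_neq0 v)); rewrite -chiD subrr chi0.
by rewrite -[_ * _]/(_ * Num.conj _) -normCK norm_chi expr1n.
Qed.

Lemma chi_shift v : chi (v + h) = - chi v.
Proof. by rewrite chiD chi_h mulrN1. Qed.

Definition shift_invariant (d : seq G) := perm_eq d [seq v + h | v <- d].

Lemma sum_chi_shift_invariant d : shift_invariant d -> \sum_(v <- d) chi v = 0.
Proof. exact: sum_eq0_perm_opp chi_shift. Qed.

Lemma dephased_CH_of_phases n (s : nat -> nat -> G) :
    (forall k : 'I_n.+1, s 0 k = 0) -> (forall k : 'I_n.+1, s k 0 = 0) ->
    (forall i j : 'I_n.+1, i != j ->
       shift_invariant [seq s i k - s j k | k <- iota 0 n.+1]) ->
  dephased_CH (\matrix_(i < n.+1, k < n.+1) chi (s i k)).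
Proof.
move=> s_row0 s_col0 s_rows; split=> [i j|j|i|].
- by rewrite mxE norm_chi.
- by rewrite mxE s_row0 chi0.
- by rewrite mxE s_col0 chi0.
apply/matrixP => i j; rewrite !mxE.
under eq_bigr => k _ do rewrite !mxE conj_chi -chiD.
have [<-|neq_ij] := eqVneq i j.
  rewrite mulr1n (eq_bigr _ (fun k _ => congr1 chi (subrr _))) chi0.
  by rewrite sumr_const card_ord.
rewrite mulr0n -(big_mkord xpredT (fun k => chi (s i k - s j k))).
by rewrite -(big_map (fun k => s i k - s j k) xpredT) sum_chi_shift_invariant ?s_rows.
Qed.

End CharacterHadamard.

Definition phase := ('Z_4 * (int * int * int))%type.

Definition half_turn : phase := (2%:R, 0).

Section PhaseCharacter.
Variables (R : realType) (a b c : R).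

Lemma expiD (x y : R) : expi (x + y) = expi x * expi y.
Proof.
by apply/eqP; rewrite eq_complex /= cosD sinD; apply/andP; split; apply/eqP; ring.
Qed.

Lemma norm_expi (t : R) : `|expi t| = 1.
Proof. by rewrite normc_def /= cos2Dsin2 sqrtr1. Qed.

Lemma norm_i : `|'i%C| = 1 :> R[i].
Proof. by rewrite normc_def /= expr0n expr1n add0r sqrtr1. Qed.

Lemma expr_i_Z4D : {morph (fun x : 'Z_4 => 'i%C ^+ x) : x y / x + y >-> x * y : R[i]}.
Proof.
move=> x y /=; rewrite expr_mod ?exprD //.
by rewrite (exprM _ 2 2) sqr_i sqrrN expr1n.
Qed.

Definition angle (t : int * int * int) : R :=
  a * t.1.1%:~R + b * t.1.2%:~R + c * t.2%:~R.

Definition phase_char (v : phase) : R[i] := 'i%C ^+ v.1 * expi (angle v.2).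

Lemma phase_charD : {morph phase_char : u v / u + v >-> u * v}.
Proof.
move=> [x s] [y t]; rewrite /phase_char /= expr_i_Z4D mulrACA -expiD; congr (_ * expi _).
by rewrite /angle /= !intrD; ring.
Qed.

Lemma norm_phase_char v : `|phase_char v| = 1.
Proof. by rewrite normrM normrX norm_i norm_expi expr1n mulr1. Qed.

Lemma phase_char_half_turn : phase_char half_turn = -1.
Proof.
by rewrite /phase_char /angle /= sqr_i !mulr0 !addr0 /expi cos0 sin0 mulr1.
Qed.

End PhaseCharacter.

Definition quarter_turns (k : nat) : 'Z_4 :=
  match k with 0%N => 0 | 1%N => 2%:R | 2%N => 1 | _ => 3%:R end.

Lemma code_quarter_turns (R : realType) (k : nat) : code R k = 'i%C ^+ quarter_turns k.
Proof.
case: k => [|[|[|k]]] /=; rewrite ?expr0 ?expr1 ?sqr_i //.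
by rewrite exprSr sqr_i mulN1r.
Qed.

Definition pm_int (pos neg : seq (nat * nat)) (i j : nat) : int :=
  if (i.+1, j.+1) \in pos then 1 else if (i.+1, j.+1) \in neg then -1 else 0.

Lemma intr_pm_int (R : pzRingType) pos neg (i j : nat) :
  (pm_int pos neg i j)%:~R =
  (if (i.+1, j.+1) \in pos then 1 else if (i.+1, j.+1) \in neg then -1 else 0 : R).
Proof. by rewrite /pm_int; case: ifP => _ //; case: ifP. Qed.

Definition V4_int := pm_int
  [:: (2,5);(2,9);(4,7);(4,8);(6,5);(6,9);(10,7);(10,8)]%N
  [:: (5,2);(5,6);(7,4);(7,10);(8,4);(8,10);(9,2);(9,6)]%N.
Definition V15_int := pm_int
  [:: (4,2);(4,6);(5,2);(5,6);(9,2);(9,6);(10,2);(10,6)]%N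
  [:: (2,4);(2,5);(2,9);(2,10);(6,4);(6,5);(6,9);(6,10)]%N.
Definition V16_int := pm_int
  [:: (4,2);(4,6);(7,5);(7,9);(8,5);(8,9);(10,2);(10,6)]%N
  [:: (2,4);(2,10);(5,7);(5,8);(6,4);(6,10);(9,7);(9,8)]%N.

Definition D10_phase (i j : nat) : phase :=
  (quarter_turns (nth 0%N (nth [::] D10_codes i) j),
   (V4_int i j, V15_int i j, V16_int i j)).

Lemma D10_phase_row0 : all (fun k => D10_phase 0 k == 0) (iota 0 10).
Proof. by vm_compute. Qed.

Lemma D10_phase_col0 : all (fun k => D10_phase k 0 == 0) (iota 0 10).
Proof. by vm_compute. Qed.

Lemma D10_phase_rows :
  all (fun i => all (fun j => (i == j) ||
         shift_invariant half_turn [seq D10_phase i k - D10_phase j k | k <- iota 0 10])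
       (iota 0 10)) (iota 0 10).
Proof. by vm_compute. Qed.

Lemma ord_in_iota n (k : 'I_n) : val k \in iota 0 n.
Proof. by rewrite mem_iota ltn_ord. Qed.

Theorem mainTheorem5 (R : realType) (a b c : R) :
  dephased_CH (hadamard_mx (D10 R)
                 (EXPi (a *: V4 R + b *: V15 R + c *: V16 R))).
Proof.
have -> : hadamard_mx (D10 R) (EXPi (a *: V4 R + b *: V15 R + c *: V16 R)) =
          \matrix_(i, k) phase_char a b c (D10_phase i k).
  by apply/matrixP => i k; rewrite !mxE -!intr_pm_int code_quarter_turns.
apply: (dephased_CH_of_phases (phase_charD a b c) (norm_phase_char a b c)
                              (phase_char_half_turn a b c)) => [k|k|i j neq_ij].
- exact/eqP/(allP D10_phase_row0)/ord_in_iota.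
- exact/eqP/(allP D10_phase_col0)/ord_in_iota.
move: (allP (allP D10_phase_rows _ (ord_in_iota i)) _ (ord_in_iota j)).
by rewrite val_eqE (negbTE neq_ij).
Qed.
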